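(* Let $\omega>0$, $0<\rho\le1$ and $A=\begin{pmatrix}0&-\rho^{-1}\omega\\ \rho\omega&0\end{pmatrix}$. Then for the autonomous system $\dot u=Au$ in $\mathbb R^2$, $$\vartheta_1^{\sup,\varlimsup}=\vartheta_1^{\sup,\varliminf}=\vartheta_1^{\varlimsup,\sup}=\vartheta_1^{\varliminf,\sup}=\omega.$$
   Context: For $A\in C([0,\infty),\mathbb R^{d\times d})$ let $\Phi(t,\tau)$ be the solution operator of $\dot u=A(t)u$ (here $\Phi(t,0)=e^{tA}$). $\mathcal G(s,d)$ is the Grassmannian of $s$-dimensional subspaces of $\mathbb R^d$, $P_V$ the orthogonal projection onto $V$, $\|\cdot\|$ the spectral norm. For $V\in\mathcal G(s,d)$ let $a_{0,T}(V)=\int_0^T\|(I_d-P_{\Phi(\tau,0)V})A(\tau)P_{\Phi(\tau,0)V}\|\,d\tau$, and $\vartheta_s^{\sup,\varlimsup}=\sup_{V}\varlimsup_{T\to\infty}\frac1Ta_{0,T}(V)$, $\vartheta_s^{\sup,\varliminf}=\sup_V\varliminf_{T\to\infty}\frac1Ta_{0,T}(V)$, $\vartheta_s^{\varlimsup,\sup}=\varlimsup_{T\to\infty}\sup_V\frac1Ta_{0,T}(V)$, $\vartheta_s^{\varliminf,\sup}=\varliminf_{T\to\infty}\sup_V\frac1Ta_{0,T}(V)$, suprema over $V\in\mathcal G(s,d)$. *)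

From HB Require Import structures.
From mathcomp Require Import all_boot all_order all_algebra.
From mathcomp Require Import all_classical all_reals all_analysis.
Set Implicit Arguments. Unset Strict Implicit. Unset Printing Implicit Defensive.
Import Order.TTheory GRing.Theory Num.Theory.
Import numFieldNormedType.Exports.
Local Open Scope classical_set_scope.
Local Open Scope ring_scope.

Section Defs.
Variable R : realType.

Definition eucl_norm (d : nat) (x : 'cV[R]_d) : R :=
  Num.sqrt (\sum_(i < d) x i ord0 ^+ 2).

Definition spec_norm (d : nat) (M : 'M[R]_d) : R :=
  sup [set eucl_norm (M *m x) | x in [set x : 'cV[R]_d | eucl_norm x = 1]].

(* An s-dimensional subspace of R^d is represented by a d x s matrix B whose
   columns form a basis (rank s); the subspace is its column space. *)
Definition grass (s d : nat) : set 'M[R]_(d, s) := [set B | \rank B = s].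

Definition orth_proj (d s : nat) (B : 'M[R]_(d, s)) : 'M[R]_d :=
  B *m invmx (B^T *m B) *m B^T.

(* Phi is the solution operator Phi(t,0) of u' = A(t) u :
   Phi(0) = I and Phi'(t) = A(t) Phi(t) (entrywise). *)
Definition is_solution_operator (d : nat) (A : R -> 'M[R]_d)
  (Phi : R -> 'M[R]_d) : Prop :=
  Phi 0 = 1%:M /\
  forall t i j, is_derive t (1:R) (fun u => Phi u i j) ((A t *m Phi t) i j).

Definition a_integrand (d s : nat) (A : R -> 'M[R]_d) (Phi : R -> 'M[R]_d)
  (B : 'M[R]_(d, s)) (tau : R) : R :=
  let P := orth_proj (Phi tau *m B) in
  spec_norm ((1%:M - P) *m A tau *m P).

Definition a0T (d s : nat) (A : R -> 'M[R]_d) (Phi : R -> 'M[R]_d)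
  (B : 'M[R]_(d, s)) (T : R) : \bar R :=
  (\int[lebesgue_measure]_(tau in `[0%R, T]%classic) (a_integrand A Phi B tau)%:E)%E.

Definition avg_a (d s : nat) (A : R -> 'M[R]_d) (Phi : R -> 'M[R]_d)
  (B : 'M[R]_(d, s)) (T : R) : \bar R := ((T^-1)%:E * a0T A Phi B T)%E.

Definition theta_sup_limsup (d s : nat) (A : R -> 'M[R]_d) (Phi : R -> 'M[R]_d) : \bar R :=
  ereal_sup [set limf_esup (avg_a A Phi (B : 'M[R]_(d, s))) (pinfty_nbhs R) | B in @grass s d].
Definition theta_sup_liminf (d s : nat) (A : R -> 'M[R]_d) (Phi : R -> 'M[R]_d) : \bar R :=
  ereal_sup [set limf_einf (avg_a A Phi (B : 'M[R]_(d, s))) (pinfty_nbhs R) | B in @grass s d].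
Definition theta_limsup_sup (d s : nat) (A : R -> 'M[R]_d) (Phi : R -> 'M[R]_d) : \bar R :=
  limf_esup (fun T => ereal_sup [set avg_a A Phi (B : 'M[R]_(d, s)) T | B in @grass s d])
    (pinfty_nbhs R).
Definition theta_liminf_sup (d s : nat) (A : R -> 'M[R]_d) (Phi : R -> 'M[R]_d) : \bar R :=
  limf_einf (fun T => ereal_sup [set avg_a A Phi (B : 'M[R]_(d, s)) T | B in @grass s d])
    (pinfty_nbhs R).

End Defs.

(* For A = [[0, -a], [b, 0]] with a = omega / rho and b = rho * omega, follow a
   line V = span B along the flow: it is spanned by w(t) = Phi(t) B = (x, y).
   1. (I - P_w) A P_w is a rank-one matrix, so its spectral norm is computed
      exactly: it equals (b x^2 + a y^2) / |w|^2, the angular speed of w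
      ([spec_norm_rank_one], [spec_norm_leak]).
   2. The energy b x^2 + a y^2 is conserved and positive, so w never vanishes
      and the integrand is c / |w|^2 with c constant ([integrand_angular_speed]).
   3. This is the derivative of the winding function
      omega t + atan ((rho - 1) x y / (rho x^2 + y^2)), which stays within
      pi / 2 of omega t; by the fundamental theorem of calculus every average
      (1/T) a_{0,T}(V) lies within pi / T of omega ([avg_a_bound]).
   4. A bound uniform in V squeezes all four combinations of sup and
      limsup / liminf at +oo to omega ([limf_esup_close], [limf_einf_close],
      [ereal_sup_const], [ereal_sup_between]). *)

From HB Require Import structures.
From mathcomp Require Import all_boot all_order all_algebra.
From mathcomp Require Import all_classical all_reals all_analysis.
From mathcomp Require Import ring lra.
Import Order.TTheory GRing.Theory Num.Theory.
Import numFieldNormedType.Exports.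
Local Open Scope classical_set_scope.
Local Open Scope ring_scope.

Notation i0 := (@ord0 1).
Notation i1 := (@ord_max 1).

Section Preliminaries.
Variable R : realType.

Lemma sum2 (f : 'I_2 -> R) : \sum_(i < 2) f i = f i0 + f i1.
Proof. by rewrite big_ord_recr big_ord1; congr (f _ + _); apply: val_inj. Qed.

Lemma ord2_cases (i : 'I_2) : i = i0 \/ i = i1.
Proof. by case: i => [[|[|i]] Hi]; [left|right|]; try apply: val_inj. Qed.

Lemma pos_comb_gt0 (a b X Y : R) : 0 < a -> 0 < b -> 0 <= X -> 0 <= Y ->
  (0 < a * X + b * Y) = (0 < X + Y).
Proof.
move=> a0 b0 X0 Y0; apply/idP/idP => h.
- rewrite lt_def addr_ge0 // andbT; apply: contraTneq h => XY0.
  have [-> ->] : X = 0 /\ Y = 0 by split; lra.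
  by rewrite !mulr0 addr0 ltxx.
- have m0 : 0 < Num.min a b by rewrite lt_min a0 b0.
  apply: (lt_le_trans (mulr_gt0 m0 h)).
  by rewrite mulrDr lerD // ler_wpM2r // ge_min lexx ?orbT.
Qed.

Lemma col_sqnorm_gt0 (d : nat) (B : 'M[R]_(d, 1)) : \rank B = 1%N ->
  0 < \sum_(i < d) B i ord0 ^+ 2.
Proof.
move=> rB; rewrite lt_def sumr_ge0 ?andbT => [|i _]; last exact: sqr_ge0.
apply/negP => /eqP S0.
have B0 := psumr_eq0P (fun i _ => sqr_ge0 (B i ord0)) S0.
suff B_0 : B = 0 by move: rB; rewrite B_0 mxrank0.
apply/matrixP => i j; rewrite ord1 mxE.
by apply/eqP; rewrite -sqrf_eq0 B0.
Qed.

Lemma grass_line_nonempty (d : nat) : @grass R 1 d.+1 !=set0.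
Proof.
exists (const_mx 1%R); rewrite /grass /=; apply/eqP; rewrite eqn_leq rank_leq_col /=.
rewrite lt0n mxrank_eq0; apply/negP => /eqP/matrixP/(_ ord0 ord0).
by rewrite !mxE => /eqP; rewrite oner_eq0.
Qed.

End Preliminaries.

Section LeakingPart.
Variable R : realType.

(* Cauchy-Schwarz in the plane, via Lagrange's identity. *)
Lemma cauchy_schwarz2 (q z : 'I_2 -> R) :
  (q i0 * z i0 + q i1 * z i1) ^+ 2 <=
  (q i0 ^+ 2 + q i1 ^+ 2) * (z i0 ^+ 2 + z i1 ^+ 2).
Proof.
rewrite -subr_ge0.
have -> : (q i0 ^+ 2 + q i1 ^+ 2) * (z i0 ^+ 2 + z i1 ^+ 2) -
  (q i0 * z i0 + q i1 * z i1) ^+ 2 = (q i0 * z i1 - q i1 * z i0) ^+ 2 by ring.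
exact: sqr_ge0.
Qed.

Lemma spec_norm_rank_one (M : 'M[R]_2) (p q : 'I_2 -> R) :
  (forall i j, M i j = p i * q j) -> 0 < q i0 ^+ 2 + q i1 ^+ 2 ->
  spec_norm M = Num.sqrt ((p i0 ^+ 2 + p i1 ^+ 2) * (q i0 ^+ 2 + q i1 ^+ 2)).
Proof.
move=> M_pq Q2_gt0.
set P2 := p i0 ^+ 2 + p i1 ^+ 2; set Q2 := q i0 ^+ 2 + q i1 ^+ 2.
have P2_ge0 : 0 <= P2 by rewrite addr_ge0 ?sqr_ge0.
have norm_Mz (z : 'cV[R]_2) : eucl_norm (M *m z) =
    Num.sqrt (P2 * (q i0 * z i0 ord0 + q i1 * z i1 ord0) ^+ 2).
  by rewrite /eucl_norm sum2 !mxE !sum2 !M_pq; congr Num.sqrt; rewrite /P2; ring.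
rewrite /spec_norm; set S := [set eucl_norm (M *m x) | x in _].
have ub : ubound S (Num.sqrt (P2 * Q2)).
  move=> _ [z /= z1 <-]; rewrite norm_Mz ler_sqrt ?mulr_ge0 ?addr_ge0 ?sqr_ge0 //.
  rewrite ler_wpM2l //; have := cauchy_schwarz2 q (fun i => z i ord0).
  move: z1; rewrite /eucl_norm sum2 => /(congr1 (fun t => t ^+ 2)).
  by rewrite sqr_sqrtr ?addr_ge0 ?sqr_ge0 // expr1n => ->; rewrite mulr1.
(* the unit vector q / |q| realises the bound *)
pose s := Num.sqrt Q2.
have s_gt0 : 0 < s by rewrite sqrtr_gt0.
have s2 : s ^+ 2 = Q2 by rewrite sqr_sqrtr // ltW.
pose zq : 'cV[R]_2 := \col_i (q i / s).
have zq_unit : eucl_norm zq = 1.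
  rewrite /eucl_norm sum2 !mxE !expr_div_n s2 -mulrDl divff ?sqrtr1 //.
  exact: lt0r_neq0.
have S_zq : S (Num.sqrt (P2 * Q2)).
  exists zq => //; rewrite norm_Mz !mxE; congr (Num.sqrt (_ * _)).
  have -> : q i0 * (q i0 / s) + q i1 * (q i1 / s) = Q2 / s.
    by rewrite /Q2; field; exact: lt0r_neq0.
  by rewrite expr_div_n s2 expr2 mulfK ?lt0r_neq0.
have S_ne : S !=set0 by exists (Num.sqrt (P2 * Q2)).
apply/eqP; rewrite eq_le ge_sup //= sup_upper_bound //.
by split => //; exists (Num.sqrt (P2 * Q2)).
Qed.

Lemma orth_proj_col (d : nat) (w : 'M[R]_(d, 1)) :
  let n := \sum_(k < d) w k ord0 ^+ 2 in n != 0 ->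
  forall i j, orth_proj w i j = n^-1 * w i ord0 * w j ord0.
Proof.
move=> n n0 i j.
have wTw : w^T *m w = n%:M.
  apply/matrixP => k l; rewrite !ord1 !mxE mulr1n.
  by apply: eq_bigr => m _; rewrite !mxE expr2.
rewrite /orth_proj wTw invmx_scalar mul_mx_scalar !mxE big_ord1 !mxE; ring.
Qed.

(* For A = [[0, -a], [b, 0]] and a line spanned by w = (x, y), the part of
   A P_w leaving the line, (I - P_w) A P_w, is the rank-one matrix
   (b x^2 + a y^2) / |w|^4 * (-y, x) (x, y)^T, of norm |b x^2 + a y^2| / |w|^2. *)
Lemma spec_norm_leak (A : 'M[R]_2) (a b : R) (w : 'M[R]_(2, 1)) :
  A i0 i0 = 0 -> A i0 i1 = - a -> A i1 i0 = b -> A i1 i1 = 0 ->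
  let x := w i0 ord0 in let y := w i1 ord0 in
  0 < x ^+ 2 + y ^+ 2 ->
  spec_norm ((1%:M - orth_proj w) *m A *m orth_proj w) =
  `|b * x ^+ 2 + a * y ^+ 2| / (x ^+ 2 + y ^+ 2).
Proof.
move=> A00 A01 A10 A11 x y n_gt0; set n := x ^+ 2 + y ^+ 2; set c := b * _ + _.
have n0 : n != 0 := lt0r_neq0 n_gt0.
have P_E : orth_proj w = \matrix_(i, j) (n^-1 * w i ord0 * w j ord0).
  by apply/matrixP => i j; rewrite orth_proj_col ?sum2 // mxE.
pose p i := c / n ^+ 2 * (if i == i0 then - y else x).
pose q i := if i == i0 then x else y.
rewrite (@spec_norm_rank_one _ p q); last by rewrite /q.
- rewrite /p /q /= -/n.
  have -> : ((c / n ^+ 2 * - y) ^+ 2 + (c / n ^+ 2 * x) ^+ 2) * n = (c / n) ^+ 2.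
    by rewrite /n; field; rewrite -/n.
  by rewrite sqrtr_sqr normf_div (gtr0_norm n_gt0).
- rewrite P_E => i j.
  case: (ord2_cases i) => ->; case: (ord2_cases j) => ->;
  rewrite !mxE !sum2 !mxE !sum2 !mxE /p /q /= -/x -/y A00 A01 A10 A11 /c /n;
  by field; rewrite -/n.
Qed.

End LeakingPart.

Section RealDerivativeRules.
Variable R : realType.
Implicit Types (f g : R -> R) (t k df dg : R).

(* The library's differentiation rules, restated for real functions of a real
   variable with products written [*] instead of scalings [*:], so that they
   chain directly on the pointwise expressions arising below. *)
Lemma is_derive_scale f t k df : is_derive t 1 f df ->
  is_derive t 1 (fun u => k * f u) (k * df).
Proof. exact: is_deriveZ. Qed.

Lemma is_derive_plus f g t df dg : is_derive t 1 f df -> is_derive t 1 g dg ->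
  is_derive t 1 (fun u => f u + g u) (df + dg).
Proof. exact: is_deriveD. Qed.

Lemma is_derive_prod f g t df dg : is_derive t 1 f df -> is_derive t 1 g dg ->
  is_derive t 1 (fun u => f u * g u) (f t * dg + g t * df).
Proof. exact: is_deriveM. Qed.

Lemma is_derive_inv f t df : f t != 0 -> is_derive t 1 f df ->
  is_derive t 1 (fun u => (f u)^-1) (- (f t) ^- 2 * df).
Proof. exact: is_deriveV. Qed.

Lemma is_derive_atan f t df : is_derive t 1 f df ->
  is_derive t 1 (fun u => atan (f u)) ((1 + f t ^+ 2)^-1 * df).
Proof. exact: (is_derive1_comp (is_derive1_atan _)). Qed.

Lemma is_derive_continuous f t df : is_derive t 1 f df -> {for t, continuous f}.
Proof. by case=> f_der _; exact/differentiable_continuous/derivable1_diffP. Qed.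

End RealDerivativeRules.

Arguments is_derive_scale {R f t} k {df}.
Arguments is_derive_plus {R f g t df dg}.
Arguments is_derive_prod {R f g t df dg}.
Arguments is_derive_inv {R f t df}.
Arguments is_derive_atan {R f t df}.

Section RotationTrajectory.
Variable R : realType.

Variables (omega rho : R).
Hypotheses (omega_gt0 : 0 < omega) (rho_gt0 : 0 < rho).
Variable A : 'M[R]_2.
Hypotheses (A00 : A i0 i0 = 0) (A01 : A i0 i1 = - (rho^-1 * omega))
  (A10 : A i1 i0 = rho * omega) (A11 : A i1 i1 = 0).
Variable Phi : R -> 'M[R]_2.
Hypothesis Phi_sol : is_solution_operator (fun _ => A) Phi.
Variable B : 'M[R]_(2, 1).
Hypothesis B_rank : \rank B = 1%N.

(* The line V = span B is carried to span w(t), w(t) = Phi(t) B = (x t, y t),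
   and w solves x' = - a y, y' = b x. *)
Let a := rho^-1 * omega.
Let b := rho * omega.
Let x (u : R) := (Phi u *m B) i0 ord0.
Let y (u : R) := (Phi u *m B) i1 ord0.
Let sqnorm (u : R) := x u ^+ 2 + y u ^+ 2.

Let a_gt0 : 0 < a. Proof. by rewrite mulr_gt0 ?invr_gt0. Qed.
Let b_gt0 : 0 < b. Proof. exact: mulr_gt0. Qed.

Lemma trajectory_derive (t : R) (i : 'I_2) :
  is_derive t 1 (fun u => (Phi u *m B) i ord0) ((A *m (Phi t *m B)) i ord0).
Proof.
have -> : (fun u => (Phi u *m B) i ord0) =
    (fun u => B i0 ord0 * Phi u i i0 + B i1 ord0 * Phi u i i1).
  by apply/funext => u; rewrite mxE sum2 ![_ * B _ _]mulrC.
apply: is_derive_eq.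
  exact: is_derive_plus (is_derive_scale _ (Phi_sol.2 t i i0))
                        (is_derive_scale _ (Phi_sol.2 t i i1)).
by rewrite mulmxA [RHS]mxE sum2 ![_ * B _ _]mulrC.
Qed.

Let x_derive (t : R) : is_derive t 1 x (- a * y t).
Proof.
apply: is_derive_eq; first exact: trajectory_derive.
by rewrite mxE sum2 A00 A01 mul0r add0r mulNr.
Qed.

Let y_derive (t : R) : is_derive t 1 y (b * x t).
Proof.
apply: is_derive_eq; first exact: trajectory_derive.
by rewrite mxE sum2 A10 A11 mul0r addr0.
Qed.

Let energy (u : R) := b * x u ^+ 2 + a * y u ^+ 2.

Lemma energy_const (u : R) : energy u = energy 0.
Proof.
apply: is_derive_0_is_cst => t; apply: is_derive_eq.
  exact: is_derive_plus (is_derive_scale b (is_derive_prod (x_derive t) (x_derive t)))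
                        (is_derive_scale a (is_derive_prod (y_derive t) (y_derive t))).
ring.
Qed.

Lemma energy_gt0 : 0 < energy 0.
Proof.
rewrite /energy /x /y Phi_sol.1 mul1mx pos_comb_gt0 ?sqr_ge0 //.
by have := @col_sqnorm_gt0 _ _ B B_rank; rewrite sum2.
Qed.

(* Since the energy is conserved and positive, w(t) never vanishes. *)
Lemma trajectory_sqnorm_gt0 (u : R) : 0 < sqnorm u.
Proof.
rewrite /sqnorm -(@pos_comb_gt0 _ b a _ _ b_gt0 a_gt0) ?sqr_ge0 //.
by rewrite -/(energy u) energy_const energy_gt0.
Qed.

Lemma integrand_angular_speed (u : R) :
  a_integrand (fun _ => A) Phi B u = energy 0 / sqnorm u.
Proof.
rewrite /a_integrand (@spec_norm_leak _ _ a b) ?A01 //; last exact: trajectory_sqnorm_gt0.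
by rewrite -/(x u) -/(y u) -/(energy u) energy_const gtr0_norm // energy_gt0.
Qed.

Lemma angular_speed_continuous (u : R) :
  {for u, continuous (fun v => energy 0 / sqnorm v)}.
Proof.
have sqnorm_derive := is_derive_plus (is_derive_prod (x_derive u) (x_derive u))
                                     (is_derive_prod (y_derive u) (y_derive u)).
exact: is_derive_continuous (is_derive_scale (energy 0)
  (is_derive_inv (lt0r_neq0 (trajectory_sqnorm_gt0 u)) sqnorm_derive)).
Qed.

(* A primitive of the angular speed: w(t) turns with the phase omega t, and
   the bounded atan term is the lag of the polar angle of w behind it. *)
Definition winding (u : R) : R :=
  omega * u + atan ((rho - 1) * (x u * y u) / (rho * x u ^+ 2 + y u ^+ 2)).

Lemma winding_derive (t : R) : is_derive t 1 winding (energy 0 / sqnorm t).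
Proof.
have D_gt0 : 0 < rho * x t ^+ 2 + y t ^+ 2.
  rewrite -[y t ^+ 2]mul1r pos_comb_gt0 ?sqr_ge0 //; exact: trajectory_sqnorm_gt0.
have := is_derive_plus (is_derive_scale omega (is_derive_id t 1))
    (is_derive_atan (is_derive_prod
      (is_derive_scale (rho - 1) (is_derive_prod (x_derive t) (y_derive t)))
      (@is_derive_inv _ (fun u => rho * x u ^+ 2 + y u ^+ 2) t _ (lt0r_neq0 D_gt0)
        (is_derive_plus (is_derive_scale rho (is_derive_prod (x_derive t) (x_derive t)))
                        (is_derive_prod (y_derive t) (y_derive t)))))).
move/is_derive_eq; apply.
rewrite -(energy_const t) /energy /sqnorm /a /b.
have n_gt0 := trajectory_sqnorm_gt0 t; move: D_gt0 n_gt0; rewrite /sqnorm.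
move: (x t) (y t) => X Y D_gt0 n_gt0.
have E_gt0 : 0 < (rho * X ^+ 2 + Y ^+ 2) ^+ 2 + ((rho - 1) * (X * Y)) ^+ 2.
  by apply: (lt_le_trans (exprn_gt0 2 D_gt0)); rewrite lerDl sqr_ge0.
field; rewrite !lt0r_neq0 //.
Qed.

Lemma winding_lag (u : R) : `|winding u - omega * u| < pi / 2.
Proof. by rewrite /winding addrAC subrr add0r ltr_norml atan_ltpi2 atan_gtNpi2. Qed.

Lemma a0T_winding (T : R) : 0 < T ->
  a0T (fun _ => A) Phi B T = (winding T - winding 0)%:E.
Proof.
move=> T_gt0; rewrite EFinB /a0T.
under eq_integral => u _ do rewrite integrand_angular_speed.
apply: continuous_FTC2 => //.
- by apply: continuous_subspaceT => u; exact: angular_speed_continuous.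
- split.
  + by move=> u _; case: (winding_derive u).
  + by apply: cvg_at_right_filter; exact: is_derive_continuous (winding_derive 0).
  + by apply: cvg_at_left_filter; exact: is_derive_continuous (winding_derive T).
- by move=> u _; rewrite derive1E; case: (winding_derive u) => _ ->.
Qed.

Lemma avg_a_bound (T : R) : 0 < T ->
  ((omega - pi / T)%:E <= avg_a (fun _ => A) Phi B T <= (omega + pi / T)%:E)%E.
Proof.
move=> T_gt0; rewrite /avg_a a0T_winding // -EFinM !lee_fin.
have := winding_lag T; have := winding_lag 0.
rewrite !ltr_norml mulr0 subr0 => /andP[lo0 hi0] /andP[loT hiT].
have pi_gt0 : 0 < pi :> R := pi_gt0 R.
have -> : omega - pi / T = (omega * T - pi) / T by field; exact: lt0r_neq0.
have -> : omega + pi / T = (omega * T + pi) / T by field; exact: lt0r_neq0.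
rewrite [T^-1 * _]mulrC !ler_pM2r ?invr_gt0 //.
by apply/andP; split; lra.
Qed.

End RotationTrajectory.

Definition eventually_close {R : realType} (g : R -> \bar R) (w : R) : Prop :=
  forall e : R, 0 < e ->
    exists M : R, forall T, M < T -> ((w - e)%:E <= g T <= (w + e)%:E)%E.

Section LimitsAtInfinity.
Variable R : realType.
Local Open Scope ereal_scope.

Lemma limf_esup_close (g : R -> \bar R) (w : R) :
  eventually_close g w -> limf_esup g (pinfty_nbhs R) = w%:E.
Proof.
move=> g_close; apply/eqP; rewrite eq_le; apply/andP; split.
- apply/lee_addgt0Pr => e e_gt0; have [M gM] := g_close e e_gt0.
  rewrite limf_esupE; apply: ge_ereal_inf.
  exists (ereal_sup (g @` [set T | M < T]%R)); last first.
    by apply: ge_ereal_sup => _ [T /gM /andP[_ ?] <-]; rewrite -EFinD.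
  by exists [set T | M < T]%R => //; exists M; split; [exact: num_real|].
- apply/lee_subgt0Pr => e e_gt0; have [M gM] := g_close e e_gt0.
  rewrite limf_esupE; apply: le_ereal_inf_tmp => _ [V [N [_ NV]] <-].
  apply: le_ereal_sup_tmp; pose T := (Num.max M N + 1)%R.
  have [MT NT] : (M < T)%R /\ (N < T)%R by split; rewrite /T ltr_pwDr // le_max lexx ?orbT.
  by exists (g T); [exists T => //; exact: NV | have /andP[? _] := gM T MT; rewrite -EFinB].
Qed.

Lemma limf_einf_close (g : R -> \bar R) (w : R) :
  eventually_close g w -> limf_einf g (pinfty_nbhs R) = w%:E.
Proof.
move=> g_close; rewrite /limf_einf (@limf_esup_close _ (- w)%R) ?EFinN ?oppeK //.
move=> e e_gt0; have [M gM] := g_close e e_gt0; exists M => T MT.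
have /andP[lo hi] := gM T MT.
have -> : (- w - e)%:E = - ((w + e)%:E) by rewrite -EFinN; congr EFin; ring.
have -> : (- w + e)%:E = - ((w - e)%:E) by rewrite -EFinN; congr EFin; ring.
suff : - ((w + e)%:E) <= - g T <= - ((w - e)%:E) by [].
by rewrite !leeN2 hi lo.
Qed.

Lemma close_of_rate (g : R -> \bar R) (w c : R) :
  (forall T, (0 < T)%R -> (w - c / T)%:E <= g T <= (w + c / T)%:E) ->
  eventually_close g w.
Proof.
move=> g_rate e e_gt0; exists (Num.max 0 (c / e))%R => T; rewrite gt_max => /andP[T_gt0 cT].
have ce : (c / T <= e)%R.
  by rewrite ler_pdivrMr // mulrC -ler_pdivrMr // ltW.
have /andP[lo hi] := g_rate T T_gt0; apply/andP; split.
- by apply: le_trans lo; rewrite lee_fin lerD2l lerN2.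
- by apply: le_trans hi _; rewrite lee_fin lerD2l.
Qed.

End LimitsAtInfinity.

Section SupOverSubspaces.
Local Open Scope ereal_scope.

Lemma ereal_sup_const (R : realType) (T : Type) (S : set T) (f : T -> \bar R) (v : \bar R) :
  S !=set0 -> (forall B, S B -> f B = v) -> ereal_sup [set f B | B in S] = v.
Proof.
move=> [B0 SB0] f_v; apply/eqP; rewrite eq_le; apply/andP; split.
- by apply: ge_ereal_sup => _ [B SB <-]; rewrite f_v.
- by apply: le_ereal_sup_tmp; exists (f B0); [exists B0 | rewrite f_v].
Qed.

Lemma ereal_sup_between (R : realType) (T : Type) (S : set T) (f : T -> \bar R) (lo hi : \bar R) :
  S !=set0 -> (forall B, S B -> lo <= f B <= hi) ->
  lo <= ereal_sup [set f B | B in S] <= hi.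
Proof.
move=> [B0 SB0] f_between; apply/andP; split.
- apply: le_ereal_sup_tmp; exists (f B0); first by exists B0.
  by have /andP[] := f_between B0 SB0.
- by apply: ge_ereal_sup => _ [B SB <-]; have /andP[] := f_between B SB.
Qed.

End SupOverSubspaces.

Theorem mainTheorem10 (R : realType) (omega rho : R)
  (homega : 0 < omega) (hrho0 : 0 < rho) (hrho1 : rho <= 1)
  (Phi : R -> 'M[R]_2) :
  let A : 'M[R]_2 := \matrix_(i < 2, j < 2)
      (if (i == 0%N :> nat) && (j == 1%N :> nat) then - (rho^-1 * omega)
       else if (i == 1%N :> nat) && (j == 0%N :> nat) then rho * omega else 0) in
  is_solution_operator (fun _ => A) Phi ->
  [/\ theta_sup_limsup 1 (fun _ => A) Phi = omega%:E,
      theta_sup_liminf 1 (fun _ => A) Phi = omega%:E,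
      theta_limsup_sup 1 (fun _ => A) Phi = omega%:E &
      theta_liminf_sup 1 (fun _ => A) Phi = omega%:E].
Proof.
move=> A Phi_sol.
have avg_bound B T : @grass R 1 2 B -> 0 < T ->
    ((omega - pi / T)%:E <= avg_a (fun _ => A) Phi B T <= (omega + pi / T)%:E)%E.
  by move=> B_line T_gt0; apply: (@avg_a_bound R omega rho homega hrho0 A) => //; rewrite mxE.
have lines := @grass_line_nonempty R 1.
have avg_close B : @grass R 1 2 B -> eventually_close (avg_a (fun _ => A) Phi B) omega.
  by move=> B_line; apply: close_of_rate => T; exact: avg_bound.
have sup_close : eventually_close
    (fun T => ereal_sup [set avg_a (fun _ => A) Phi B T | B in @grass R 1 2]) omega.
  by apply: close_of_rate => T T_gt0; apply: ereal_sup_between => // B B_line; exact: avg_bound.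
split.
- by apply: ereal_sup_const => // B /avg_close; exact: limf_esup_close.
- by apply: ereal_sup_const => // B /avg_close; exact: limf_einf_close.
- exact: limf_esup_close.
- exact: limf_einf_close.
Qed.
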